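(* Let $n\ge 2$ (in particular $n\ge3$), let $0<\varepsilon<1$ and let $K_{\varepsilon}$ be the body of revolution about the $x_n$-axis in $\mathbb{R}^n$ whose radial function is $\rho_{K_\varepsilon}(\phi)=(1+\varepsilon\cos^3\phi)^{-1/3}$, where $0\le\phi\le\pi$ is the angle with the positive $x_n$-axis; equivalently $\rho_{K_\varepsilon}(x)=(|x|^3+\varepsilon x_n^3)^{-1/3}$ for $x=(x_1,\dots,x_n)\in\mathbb{R}^n\setminus\{o\}$. Then $\rho_{K_\varepsilon}\in C^\infty(S^{n-1})$, the body $K_\varepsilon$ is not centrally symmetric, and there is a positive $\varepsilon_0\le 1$ such that $K_\varepsilon$ is convex for all $0<\varepsilon<\varepsilon_0$.
   Context: For a body $K$ star-shaped with respect to the origin and containing it in its interior, the radial function is $\rho_K(x)=\max\{c\in\mathbb{R}: cx\in K\}$, $x\ne o$ (homogeneous of degree $-1$); the body is determined by $\rho_K$ on $S^{n-1}$ via $K=\{x: x=o \text{ or } \rho_K(x)\ge 1\}$. A set is centrally symmetric if it is a translate of a set $X$ with $X=-X$. *)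

From HB Require Import structures.
From mathcomp Require Import all_boot all_order all_algebra.
From mathcomp Require Import all_classical all_reals all_analysis.
Set Implicit Arguments. Unset Strict Implicit. Unset Printing Implicit Defensive.
Import Order.TTheory GRing.Theory Num.Theory.
Import numFieldNormedType.Exports.
Local Open Scope classical_set_scope.
Local Open Scope ring_scope.

Section Defs.
Variables (R : realType) (n : nat).
Notation V := 'rV[R]_n.

Definition enorm (x : V) : R := Num.sqrt (\sum_(i < n) x 0 i ^+ 2).

Definition sphere : set V := [set x | enorm x = 1].

Definition evec (i : 'I_n) : V := delta_mx 0 i.

Definition partial (i : 'I_n) (f : V -> R) : V -> R :=
  fun x => 'D_(evec i) f x.

Definition iter_partial (s : seq 'I_n) (f : V -> R) : V -> R :=
  foldr partial f s.

Definition smooth_on (U : set V) (f : V -> R) : Prop :=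
  open U /\
  (forall (s : seq 'I_n) (i : 'I_n) (x : V), U x ->
      derivable (iter_partial s f) x (evec i)) /\
  (forall (s : seq 'I_n) (x : V), U x ->
      {for x, continuous (iter_partial s f)}).

Definition smooth_on_sphere (f : V -> R) : Prop :=
  exists (U : set V) (g : V -> R),
    sphere `<=` U /\ smooth_on U g /\ (forall x, sphere x -> g x = f x).

Definition body_of_radial (rho : V -> R) : set V :=
  [set x | x = 0 \/ 1 <= rho x].

Definition centrally_symmetric (K : set V) : Prop :=
  exists (t : V) (X : set V),
    (forall y, X y <-> X (- y)) /\ K = [set t + y | y in X].

Definition convex (K : set V) : Prop :=
  forall x y (t : R), K x -> K y -> 0 <= t -> t <= 1 ->
    K ((1 - t) *: x + t *: y).

Definition rho_eps (j : 'I_n) (eps : R) (x : V) : R :=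
  powR (enorm x ^+ 3 + eps * x 0 j ^+ 3) (- (1 / 3)).

Definition K_eps (j : 'I_n) (eps : R) : set V :=
  body_of_radial (rho_eps j eps).

End Defs.

From HB Require Import structures.
From mathcomp Require Import all_boot all_order all_algebra.
From mathcomp Require Import all_classical all_reals all_analysis.
From mathcomp Require Import ring lra.
Import Order.TTheory GRing.Theory Num.Theory.
Import numFieldNormedType.Exports.
Local Open Scope classical_set_scope.
Local Open Scope ring_scope.

(* Off the origin [rho_eps j eps x ^- 3] is [gauge3 x = |x|^3 + eps x_j^3], so [K_eps j eps]
   is the sublevel set [gauge3 <= 1].
   Convexity: for [eps <= 1/8] the function [gauge3] is convex, because along a segment the
   strict convexity of [|x|^3] beats the possible concavity of [eps x_j^3].
   Asymmetry: a centre of symmetry [c] must have [c_j < 0], since the reflection of [-e_j]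
   through [c] would otherwise leave the body; reflecting [e_i] or [-e_i] ([i != j]) then
   yields a point [y] with [|y_i| >= 1] and [y_j < 0], at which [gauge3 y > 1].
   Smoothness: on the sphere [rho_eps] is [(1 + eps x_j^3)^(-1/3)], a function of [x_j]
   alone whose [k]-th derivative is a polynomial times [(1 + eps u^3)^(-1/3 - k)]. *)

Lemma cube_convex_defect_ge {R : realFieldType} (t a b p q : R) :
  0 <= t <= 1 -> `|a| <= p -> `|b| <= q ->
  t * (1 - t) * (b - a) ^+ 2 * (- 2 * (p + q)) <=
    (1 - t) * a ^+ 3 + t * b ^+ 3 - ((1 - t) * a + t * b) ^+ 3.
Proof.
move=> /andP[t0 t1]; rewrite !ler_norml => /andP[pa ap] /andP[qb bq].
have -> : (1 - t) * a ^+ 3 + t * b ^+ 3 - ((1 - t) * a + t * b) ^+ 3 =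
  t * (1 - t) * (b - a) ^+ 2 * ((2 - t) * a + (1 + t) * b) by ring.
apply: ler_wpM2l; first by rewrite mulr_ge0 ?sqr_ge0 // mulr_ge0 // subr_ge0.
have : 0 <= (2 - t) * (a + p) by rewrite mulr_ge0 //; lra.
have : 0 <= (1 + t) * (b + q) by rewrite mulr_ge0 //; lra.
have : 0 <= t * p by rewrite mulr_ge0 //; lra.
have : 0 <= (1 - t) * q by rewrite mulr_ge0 //; lra.
lra.
Qed.

Lemma cube_norm_defect_key {R : realFieldType} (p q m D : R) :
  0 <= p <= q -> p <= m -> 0 <= D <= (p + q) ^+ 2 ->
  (p + q) * D <= 4 * ((p + q) * (p - q) ^+ 2 + m * D).
Proof.
move=> /andP[p0 pq] pm /andP[D0 Dpq].
(* [m * D] alone suffices when [q <= 3 p]; otherwise [(p - q)^2] dominates [D]. *)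
have [q_le|q_gt] := leP q (3 * p).
  have : (p + q) * D <= 4 * m * D by apply: ler_wpM2r => //; lra.
  have : 0 <= (p + q) * (p - q) ^+ 2 by rewrite mulr_ge0 ?sqr_ge0 //; lra.
  lra.
have : D <= 4 * (p - q) ^+ 2 by nra.
have : 0 <= m * D by rewrite mulr_ge0 //; lra.
nra.
Qed.

Lemma cube_norm_defect_ge {R : realFieldType} (t p q s D : R) :
  0 <= t <= 1 -> 0 <= p -> 0 <= q -> 0 <= s -> s <= (1 - t) * p + t * q ->
  0 <= D <= (p + q) ^+ 2 ->
  s ^+ 2 = (1 - t) * p ^+ 2 + t * q ^+ 2 - t * (1 - t) * D ->
  t * (1 - t) * (p + q) * D <= 4 * ((1 - t) * p ^+ 3 + t * q ^+ 3 - s ^+ 3).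
Proof.
move=> /andP[t0 t1] p0 q0 s0 s_le /andP[D0 Dpq] s2.
set mu := (1 - t) * p + t * q.
have T0 : 0 <= t * (1 - t) by rewrite mulr_ge0 // subr_ge0.
have s3_le : s ^+ 3 <= mu * s ^+ 2.
  by rewrite exprSr mulrC ler_wpM2r // sqr_ge0.
have gap : (1 - t) * p ^+ 3 + t * q ^+ 3 - mu * s ^+ 2 =
  t * (1 - t) * ((p + q) * (p - q) ^+ 2 + mu * D) by rewrite s2 /mu; ring.
have key : (p + q) * D <= 4 * ((p + q) * (p - q) ^+ 2 + mu * D).
  have [pq|qp] := leP p q.
    apply: cube_norm_defect_key; [by rewrite p0 pq | | by rewrite D0 Dpq].
    rewrite -subr_ge0 (_ : mu - p = t * (q - p)); last by rewrite /mu; ring.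
    by rewrite mulr_ge0 // subr_ge0.
  have -> : (p - q) ^+ 2 = (q - p) ^+ 2 by ring.
  rewrite [p + q]addrC; apply: cube_norm_defect_key; [by rewrite q0 ltW | | by rewrite D0 addrC].
  rewrite -subr_ge0 (_ : mu - q = (1 - t) * (p - q)); last by rewrite /mu; ring.
  by rewrite mulr_ge0 // subr_ge0 // ltW.
rewrite -mulrA; apply: (le_trans (ler_wpM2l T0 key)).
rewrite mulrCA -gap ler_pM2l ?ltr0n // lerD2l lerN2.
exact: s3_le.
Qed.

Lemma cube_gap_gt1 {R : realFieldType} (p d e : R) :
  0 <= p -> 0 < d -> e < 1 -> 1 + d ^+ 2 <= p ^+ 2 -> 1 < p ^+ 3 - e * d ^+ 3.
Proof.
move=> p0 d0 e1 pd.
have p1 : 1 <= p by rewrite -(@ler_sqr _ 1 p) ?nnegrE ?expr1n //; nra.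
have dp : d <= p by rewrite -(@ler_sqr _ d p) ?nnegrE ?ltW //; nra.
have : p * (1 + d ^+ 2) <= p * p ^+ 2 by rewrite ler_wpM2l.
have : d * d ^+ 2 <= p * d ^+ 2 by rewrite ler_wpM2r ?sqr_ge0.
have : e * d ^+ 3 < d ^+ 3 by rewrite gtr_pMl ?exprn_gt0.
rewrite !exprS !expr0 !mulr1; lra.
Qed.

Section Euclidean.
Context {R : realType} {n : nat}.
Implicit Types (x y : 'rV[R]_n).

Definition dotv x y : R := \sum_(i < n) x 0 i * y 0 i.

Lemma enorm_ge0 x : 0 <= enorm x.
Proof. exact: sqrtr_ge0. Qed.

Lemma enorm_sq x : enorm x ^+ 2 = \sum_(i < n) x 0 i ^+ 2.
Proof. by rewrite sqr_sqrtr // sumr_ge0 // => i _; apply: sqr_ge0. Qed.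

Lemma enorm0_eq0 x : enorm x = 0 -> x = 0.
Proof.
move=> x0; have /eqP := enorm_sq x; rewrite x0 expr0n eq_sym psumr_eq0 => [/allP x_0|i _].
  apply/matrixP => a i; rewrite (ord1 a) mxE.
  by have /implyP/(_ isT) := x_0 i (mem_index_enum _); rewrite sqrf_eq0 => /eqP.
exact: sqr_ge0.
Qed.

Lemma enorm_lincomb a b x y : enorm (a *: x + b *: y) ^+ 2 =
  a ^+ 2 * enorm x ^+ 2 + 2 * a * b * dotv x y + b ^+ 2 * enorm y ^+ 2.
Proof.
rewrite !enorm_sq /dotv !mulr_sumr -!big_split /=.
by apply: eq_bigr => i _; rewrite !mxE; ring.
Qed.

Lemma dotv_le x y : dotv x y <= enorm x * enorm y.
Proof.
have [x0 | xn0] := eqVneq (enorm x) 0.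
  by rewrite x0 mul0r (enorm0_eq0 _ x0) /dotv big1 // => i _; rewrite mxE mul0r.
have [y0 | yn0] := eqVneq (enorm y) 0.
  by rewrite y0 mulr0 (enorm0_eq0 _ y0) /dotv big1 // => i _; rewrite mxE mulr0.
have pq_gt0 : 0 < enorm x * enorm y by rewrite mulr_gt0 // lt0r ?enorm_ge0 ?andbT.
have := sqr_ge0 (enorm (enorm y *: x + (- enorm x) *: y)).
rewrite enorm_lincomb.
have -> : enorm y ^+ 2 * enorm x ^+ 2 + 2 * enorm y * - enorm x * dotv x y +
  (- enorm x) ^+ 2 * enorm y ^+ 2 =
  2 * (enorm x * enorm y) * (enorm x * enorm y - dotv x y) by ring.
by rewrite pmulr_rge0 ?subr_ge0 // mulr_gt0.
Qed.

Lemma enormZ a x : enorm (a *: x) = `|a| * enorm x.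
Proof.
rewrite /enorm -sqrtr_sqr -sqrtrM ?sqr_ge0 // mulr_sumr.
by congr Num.sqrt; apply: eq_bigr => i _; rewrite mxE; ring.
Qed.

Lemma enormD x y : enorm (x + y) <= enorm x + enorm y.
Proof.
rewrite -ler_sqr ?nnegrE ?addr_ge0 ?enorm_ge0 //.
have := enorm_lincomb 1 1 x y; rewrite !scale1r => ->.
have := dotv_le x y; lra.
Qed.

Lemma coord_le_enorm x i : `|x 0 i| <= enorm x.
Proof.
rewrite -ler_sqr ?nnegrE ?enorm_ge0 // real_normK ?num_real // enorm_sq.
by rewrite (bigD1 i) //= lerDl sumr_ge0 // => k _; apply: sqr_ge0.
Qed.

Lemma coord2_le_enorm x i k : i != k -> x 0 i ^+ 2 + x 0 k ^+ 2 <= enorm x ^+ 2.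
Proof.
move=> ik; rewrite enorm_sq (bigD1 i) //= (bigD1 k) 1?eq_sym //=.
by rewrite addrA lerDl sumr_ge0 // => l _; apply: sqr_ge0.
Qed.

Lemma enorm_convex_sq t x y : enorm ((1 - t) *: x + t *: y) ^+ 2 =
  (1 - t) * enorm x ^+ 2 + t * enorm y ^+ 2 - t * (1 - t) * enorm (y - x) ^+ 2.
Proof.
rewrite !enorm_sq !mulr_sumr -!(big_split, sumrB) /=.
by apply: eq_bigr => i _; rewrite !mxE; ring.
Qed.

Lemma enorm_cube_convex t x y : 0 <= t <= 1 ->
  t * (1 - t) * (enorm x + enorm y) * enorm (y - x) ^+ 2 <=
  4 * ((1 - t) * enorm x ^+ 3 + t * enorm y ^+ 3 - enorm ((1 - t) *: x + t *: y) ^+ 3).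
Proof.
move=> /andP[t0 t1].
have tri : enorm (y - x) <= enorm x + enorm y.
  by rewrite addrC -[enorm x](mul1r) -(normrN1 R) -enormZ scaleN1r enormD.
apply: cube_norm_defect_ge; rewrite ?t0 ?t1 ?enorm_ge0 ?sqr_ge0 ?enorm_convex_sq //.
- apply: le_trans (enormD _ _) _.
  by rewrite !enormZ !ger0_norm ?subr_ge0.
- by rewrite lerXn2r ?nnegrE ?addr_ge0 ?enorm_ge0.
Qed.

End Euclidean.

Section PolyPowR.
Context {R : realType}.
Variable H : {poly R}.

Lemma is_derive_poly_powR (P : {poly R}) (r u : R) : 0 < H.[u] ->
  is_derive u 1 (fun v => P.[v] * powR H.[v] r)
    ((P^`() * H + r *: (P * H^`())).[u] * powR H.[u] (r - 1)).
Proof.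
move=> Hu.
have -> : (fun v => P.[v] * powR H.[v] r) = horner P * ((@powR R ^~ r) \o horner H).
  by apply/funext.
have dpow : is_derive u 1 ((@powR R ^~ r) \o horner H) (r * powR H.[u] (r - 1) * H^`().[u]).
  exact: is_derive1_comp (is_derive1_powR r Hu) (is_derive_poly H u).
apply: is_derive_eq (is_deriveM (is_derive_poly P u) dpow) _.
rewrite /comp; have -> : powR H.[u] r = H.[u] * powR H.[u] (r - 1).
  rewrite powRB; last by rewrite (gt_eqF Hu) implybT.
  by rewrite powRr1 ?ltW // mulrC divfK // gt_eqF.
by rewrite !hornerE /GRing.scale /=; ring.
Qed.

Lemma horner_gt0_near u : 0 < H.[u] -> \forall v \near u, 0 < H.[v].
Proof.
have H_cvg : horner H v @[v --> u] --> H.[u] by exact: continuous_horner.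
by move=> Hu; apply: (@cvgr_gt R _ _ _ _ _ H_cvg 0 Hu).
Qed.

(* [r_deriv_poly r k] is the polynomial [P] with [(H ^ r)^(k) = P * H ^ (r - k)]. *)
Fixpoint r_deriv_poly (r : R) (k : nat) : {poly R} :=
  if k is k'.+1 then
    let P := r_deriv_poly r k' in P^`() * H + (r - k'%:R) *: (P * H^`())
  else 1.

Lemma derive1n_powR_poly (r : R) k u : 0 < H.[u] ->
  derive1n k (fun v => powR H.[v] r) u = (r_deriv_poly r k).[u] * powR H.[u] (r - k%:R).
Proof.
elim: k u => [|k IH] u Hu; first by rewrite derive1n0 hornerC mul1r subr0.
have H_near := horner_gt0_near _ Hu.
rewrite derive1nS derive1E.
rewrite (@near_eq_derive _ _ _ _ (fun v => (r_deriv_poly r k).[v] * powR H.[v] (r - k%:R)) u 1).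
  have [_ ->] := is_derive_poly_powR (r_deriv_poly r k) (r - k%:R) _ Hu.
  by rewrite [in RHS]mulrSr opprD addrA.
by near=> v; apply: IH; near: v.
Unshelve. all: by end_near.
Qed.

Lemma derivable_derive1n_powR_poly (r : R) k u : 0 < H.[u] ->
  derivable (derive1n k (fun v => powR H.[v] r)) u 1.
Proof.
move=> Hu.
have H_near := horner_gt0_near _ Hu.
have [+ _] := is_derive_poly_powR (r_deriv_poly r k) (r - k%:R) _ Hu.
apply: near_eq_derivable.
by near=> v; rewrite derive1n_powR_poly //; near: v.
Unshelve. all: by end_near.
Qed.

End PolyPowR.

Section CoordinateFunction.
Context {R : realType} {n : nat}.
Variable j : 'I_n.
Implicit Types (g : R -> R) (x v : 'rV[R]_n).

Lemma coord_difference_quotient g x v :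
  (fun h : R => h^-1 *: (((fun y : 'rV[R]_n => g (y 0 j)) \o shift x) (h *: v) - g (x 0 j))) =
  (fun h : R => h^-1 *: ((g \o shift (x 0 j)) (h *: v 0 j) - g (x 0 j))).
Proof. by apply/funext => h /=; rewrite !mxE. Qed.

Lemma derive_coord g x v : 'D_v (fun y : 'rV[R]_n => g (y 0 j)) x = 'D_(v 0 j) g (x 0 j).
Proof. by rewrite /derive coord_difference_quotient. Qed.

Lemma derivable_coord g x v :
  derivable g (x 0 j) (v 0 j) -> derivable (fun y : 'rV[R]_n => g (y 0 j)) x v.
Proof. by rewrite /derivable coord_difference_quotient. Qed.

Variables (f : R -> R) (O : set R).
Hypothesis O_open : open O.
Hypothesis f_smooth : forall k u, O u -> derivable (derive1n k f) u 1.

Let iter_derive (s : seq 'I_n) : R -> R :=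
  if all (pred1 j) s then derive1n (size s) f else cst 0.

Lemma iter_partial_coord s :
  iter_partial s (fun x : 'rV[R]_n => f (x 0 j)) = (fun x => iter_derive s (x 0 j)).
Proof.
elim: s => [|i s IH]; first by apply/funext => x; rewrite /iter_derive derive1n0.
rewrite /iter_partial /= -/(iter_partial s _) IH; apply/funext => x.
rewrite /partial derive_coord /evec mxE eqxx /iter_derive /=.
have [_|_] := eqVneq j i; last by rewrite mulr0n derive0.
rewrite mulr1n -derive1E /=.
by case: (all (pred1 j) s) => //=; rewrite derive1_cst.
Qed.

Lemma iter_derive_derivable s u : O u -> derivable (iter_derive s) u 1.
Proof. by rewrite /iter_derive; case: all => [/f_smooth|_]; last exact: derivable_cst. Qed.

Lemma smooth_on_coord :
  smooth_on ((fun x : 'rV[R]_n => x 0 j) @^-1` O) (fun x : 'rV[R]_n => f (x 0 j)).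
Proof.
split; [|split] => [|s i x Ox|s x Ox]; rewrite ?iter_partial_coord.
- by apply: open_comp O_open => x _; exact: coord_continuous.
- apply: derivable_coord; rewrite /evec mxE eqxx /=.
  case: (j == i); [rewrite mulr1n | rewrite mulr0n; exact: derivable0].
  exact: iter_derive_derivable.
- apply: (@continuous_comp _ _ _ (fun y : 'rV[R]_n => y 0 j) (iter_derive s)).
    exact: coord_continuous.
  apply: differentiable_continuous; apply/derivable1_diffP.
  exact: iter_derive_derivable.
Qed.

End CoordinateFunction.

Lemma powR_Nthird_cube {R : realType} (a : R) : 0 <= a -> powR a (-(1/3)) ^+ 3 = a^-1.
Proof.
move=> a0; rewrite -powR_mulrn ?powR_ge0 // -powRrM.
by rewrite (_ : -(1/3) * 3%:R = -1) ?powR_inv1 //; field.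
Qed.

Lemma evecZ_coord {R : realType} {n} (u : R) (i k : 'I_n) : (u *: evec R i) 0 k = u * (k == i)%:R.
Proof. by rewrite !mxE eqxx. Qed.

Lemma enorm_evecZ {R : realType} {n} (u : R) (i : 'I_n) : enorm (u *: evec R i) = `|u|.
Proof.
rewrite /enorm (bigD1 i) //= big1 => [|k ki]; last by rewrite evecZ_coord (negbTE ki) mulr0 expr0n.
by rewrite evecZ_coord eqxx mulr1 addr0 sqrtr_sqr.
Qed.

Lemma centrally_symmetric_reflect {R : realType} {n} (K : set 'rV[R]_n) :
  centrally_symmetric K -> exists c, forall x, K x -> K (c - x).
Proof.
move=> [t [X [X_sym ->]]]; exists (t + t) => _ [y Xy <-].
by exists (- y); [exact: (X_sym y).1 | rewrite opprD addrACA subrr add0r].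
Qed.

Section Gauge.
Context {R : realType} {n : nat}.
Variables (j : 'I_n) (eps : R).
Implicit Types (x y : 'rV[R]_n).

Definition gauge3 x : R := enorm x ^+ 3 + eps * x 0 j ^+ 3.

(* With [W = t (1 - t) (|x| + |y|)] and [D = |y - x|^2], the norm part gains at least
   [W D / 4] while [eps x_j^3] loses at most [2 eps W D]; hence [eps <= 1/8]. *)
Lemma gauge3_convex t x y : 0 <= eps <= 1 / 8 -> 0 <= t <= 1 ->
  gauge3 ((1 - t) *: x + t *: y) <= (1 - t) * gauge3 x + t * gauge3 y.
Proof.
move=> /andP[e0 e8] t01; have /andP[t0 t1] := t01.
have norm_gap := enorm_cube_convex t x y t01.
have coord_gap := cube_convex_defect_ge _ _ _ _ _ t01 (coord_le_enorm x j) (coord_le_enorm y j).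
have coord_dist : (y 0 j - x 0 j) ^+ 2 <= enorm (y - x) ^+ 2.
  have := coord_le_enorm (y - x) j; rewrite !mxE => coord_le.
  by rewrite -real_normK ?num_real // lerXn2r ?nnegrE ?enorm_ge0.
have W0 : 0 <= t * (1 - t) * (enorm x + enorm y).
  by rewrite mulr_ge0 ?addr_ge0 ?enorm_ge0 // mulr_ge0 // subr_ge0.
have D0 : 0 <= enorm (y - x) ^+ 2 := sqr_ge0 _.
rewrite /gauge3 !mxE; move: norm_gap coord_gap coord_dist W0 D0.
set W := t * (1 - t) * _; set D := enorm (y - x) ^+ 2.
set a := x 0 j; set b := y 0 j; set s := enorm ((1 - t) *: x + t *: y).
set C := (1 - t) * a ^+ 3 + t * b ^+ 3 - _.
rewrite (_ : _ * (-2 * _) = -2 * (W * (b - a) ^+ 2)); last by rewrite /W; ring.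
move=> norm_gap coord_gap coord_dist W0 D0.
rewrite -subr_ge0 (_ : _ - _ = (1 - t) * enorm x ^+ 3 + t * enorm y ^+ 3 - s ^+ 3 + eps * C);
  last by rewrite /C; ring.
have := ler_wpM2l e0 coord_gap; have := ler_wpM2l e0 (ler_wpM2l W0 coord_dist).
have : eps * (W * D) <= 1 / 8 * (W * D) by rewrite ler_wpM2r // mulr_ge0.
move: norm_gap; clearbody W C; lra.
Qed.

Lemma gauge3_ge x : (1 - `|eps|) * enorm x ^+ 3 <= gauge3 x.
Proof.
have : `|eps * x 0 j ^+ 3| <= `|eps| * enorm x ^+ 3.
  by rewrite normrM normrX ler_wpM2l // lerXn2r ?nnegrE ?enorm_ge0 ?coord_le_enorm.
rewrite ler_norml /gauge3 => /andP[lb _]; lra.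
Qed.

Lemma gauge3_gt0 x : `|eps| < 1 -> x != 0 -> 0 < gauge3 x.
Proof.
move=> e1 x0; apply: lt_le_trans (gauge3_ge x); rewrite mulr_gt0 ?subr_gt0 //.
rewrite exprn_gt0 // lt0r enorm_ge0 andbT.
by apply: contra x0 => /eqP/enorm0_eq0 ->.
Qed.

Lemma gauge3_0 : gauge3 0 = 0.
Proof.
rewrite /gauge3 /enorm big1 => [|i _]; last by rewrite mxE expr0n.
by rewrite sqrtr0 mxE !expr0n /= mulr0 addr0.
Qed.

Lemma K_epsE : `|eps| < 1 -> K_eps j eps = [set x | gauge3 x <= 1].
Proof.
move=> e1; apply/predeqP => x; rewrite /K_eps /body_of_radial /=.
have [->|x0] := eqVneq x 0; first by split => [_|_]; [rewrite gauge3_0 ler01 | left].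
have rho_ge1 : (1 <= rho_eps j eps x) = (gauge3 x <= 1).
  rewrite -(@expr_ge1 _ 3) ?powR_ge0 // powR_Nthird_cube ?invf_ge1 //.
    exact: gauge3_gt0.
  exact/ltW/gauge3_gt0.
by rewrite rho_ge1; split => [[/eqP x_0|//]|]; [rewrite x_0 in x0 | right].
Qed.

Lemma K_eps_convex : 0 <= eps <= 1 / 8 -> convex (K_eps j eps).
Proof.
move=> e8; have /andP[e0 e81] := e8.
rewrite K_epsE ?ger0_norm //; last lra.
move=> x y t /= Kx Ky t0 t1; apply: le_trans (gauge3_convex t x y e8 _) _; first by rewrite t0.
have : (1 - t) * gauge3 x <= (1 - t) * 1 by rewrite ler_wpM2l ?subr_ge0.
have : t * gauge3 y <= t * 1 by rewrite ler_wpM2l.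
lra.
Qed.

Lemma gauge3_coord_le x : `|x 0 j| ^+ 3 + eps * x 0 j ^+ 3 <= gauge3 x.
Proof. by rewrite lerD2r lerXn2r ?nnegrE ?enorm_ge0 ?coord_le_enorm. Qed.

Lemma gauge3_evecZ i u : gauge3 (u *: evec R i) = `|u| ^+ 3 + eps * (u * (j == i)%:R) ^+ 3.
Proof. by rewrite /gauge3 enorm_evecZ evecZ_coord. Qed.

Lemma gauge3_gt1_axis x : 0 < eps -> 1 <= x 0 j -> 1 < gauge3 x.
Proof.
move=> e0 x1; apply: lt_le_trans (gauge3_coord_le x).
have x0 : 0 <= x 0 j := le_trans ler01 x1.
have x3 : 1 <= x 0 j ^+ 3 by rewrite expr_ge1.
rewrite ger0_norm //; have := ler_wpM2l (ltW e0) x3; lra.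
Qed.

Lemma gauge3_gt1_lower i y : i != j -> eps < 1 -> 1 <= `|y 0 i| -> y 0 j < 0 -> 1 < gauge3 y.
Proof.
move=> ij e1 yi yj.
have := coord2_le_enorm y i j ij; rewrite -[y 0 i ^+ 2]real_normK ?num_real //.
move=> y_sq.
rewrite /gauge3 (_ : y 0 j ^+ 3 = - (- y 0 j) ^+ 3); last by ring.
rewrite mulrN; apply: cube_gap_gt1; rewrite ?enorm_ge0 ?oppr_gt0 //.
by apply: le_trans y_sq; rewrite sqrrN lerD2r expr_ge1.
Qed.

Lemma K_eps_not_centrally_symmetric i : i != j -> 0 < eps < 1 ->
  ~ centrally_symmetric (K_eps j eps).
Proof.
move=> ij /andP[e0 e1] /centrally_symmetric_reflect [c Kc].
rewrite K_epsE ?gtr0_norm // in Kc.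
have off_j u : (c - u *: evec R i) 0 j = c 0 j.
  by rewrite !mxE eq_sym (negbTE ij) andbF mulr0 subr0.
have coord_i u : (c - u *: evec R i) 0 i = c 0 i - u.
  by rewrite !mxE !eqxx /= mulr1.
have cj : c 0 j < 0.
  rewrite ltNge; apply/negP => c0.
  have Kj : gauge3 ((-1) *: evec R j) <= 1.
    rewrite gauge3_evecZ eqxx mulr1 normrN1 expr1n (_ : (-1) ^+ 3 = -1 :> R); last by ring.
    lra.
  move: (Kc _ Kj); apply/negP; rewrite -ltNge; apply: gauge3_gt1_axis => //.
  by rewrite !mxE !eqxx /= mulr1 opprK lerDr.
have K_i u : `|u| = 1 -> gauge3 (c - u *: evec R i) <= 1.
  move=> u1; apply: Kc; rewrite /= gauge3_evecZ eq_sym (negbTE ij) mulr0.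
  by rewrite u1 expr1n expr0n mulr0 addr0.
have [ci|ci] := leP 0 (c 0 i).
  have := K_i (-1) (normrN1 _); apply/negP; rewrite -ltNge.
  apply: gauge3_gt1_lower ij e1 _ _; rewrite ?off_j // coord_i opprK ger0_norm ?addr_ge0 //.
  by rewrite lerDr.
have := K_i 1 (normr1 _); apply/negP; rewrite -ltNge.
apply: gauge3_gt1_lower ij e1 _ _; rewrite ?off_j // coord_i ler0_norm; lra.
Qed.

Lemma rho_eps_smooth : `|eps| < 1 -> smooth_on_sphere (rho_eps j eps).
Proof.
move=> e1; pose H : {poly R} := 1 + eps *: 'X^3.
have HE u : H.[u] = 1 + eps * u ^+ 3 by rewrite !hornerE.
exists ((fun x : 'rV[R]_n => x 0 j) @^-1` [set u | 0 < H.[u]]).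
exists (fun x => powR H.[x 0 j] (-(1/3))); split; [|split].
- move=> x /= x1; rewrite HE.
  have : `|eps * x 0 j ^+ 3| <= `|eps|.
    rewrite normrM normrX -[leRHS]mulr1 ler_wpM2l // exprn_ile1 //.
    by rewrite -x1 coord_le_enorm.
  rewrite ler_norml => /andP[+ _]; lra.
- apply: (smooth_on_coord j (fun u => powR H.[u] (-(1/3)))) => [|k u Hu].
    rewrite (_ : [set u | 0 < H.[u]] = horner H @^-1` [set y | 0 < y]) //.
    by apply: open_comp; [move=> u _; exact: continuous_horner | exact: open_gt].
  exact: derivable_derive1n_powR_poly.
- by move=> x x1; rewrite /rho_eps x1 expr1n HE.
Qed.

End Gauge.

Theorem lemma3p2 (R : realType) (n : nat) (hn : (2 <= n)%N)
    (j : 'I_n) (hj : nat_of_ord j = n.-1) :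
  (forall eps : R, 0 < eps -> eps < 1 ->
      smooth_on_sphere (rho_eps j eps) /\
      ~ centrally_symmetric (K_eps j eps)) /\
  (exists eps0 : R, 0 < eps0 /\ eps0 <= 1 /\
      forall eps : R, 0 < eps -> eps < eps0 -> convex (K_eps j eps)).
Proof.
have i0_neq_j : Ordinal (ltnW hn) != j.
  apply/eqP => /(congr1 val) /= i0_eq; move: (hn).
  by rewrite -(prednK (ltnW hn)) -hj -i0_eq.
split=> [eps e0 e1|].
  split; first by apply: rho_eps_smooth; rewrite gtr0_norm.
  by apply: K_eps_not_centrally_symmetric i0_neq_j _; rewrite e0.
exists (1 / 8); split; [lra | split; [lra | ]].
by move=> eps e0 e8; apply: K_eps_convex; rewrite ltW //; lra.
Qed.
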